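(* Let $(X_i)_{i\in I}$ be a family of zero-dimensional coherent domains and $F\subseteq\prod_{i\in I}\mathcal V_{\le1}(X_i)\subseteq\prod_{i\in I}\mathcal V(X_i)$ a finite set. Then $\mathrm{conv}\,F$ is Lawson-compact in $\prod_{i\in I}\mathcal V(X_i)$.
   Context: A domain is a continuous dcpo; coherent means the intersection of two compact saturated subsets is compact; zero-dimensional means the Scott topology has a basis of clopens. $\mathcal V(X)$ is the set of continuous valuations on $X$ (strict, monotone, modular maps from Scott-opens to $[0,\infty]$ preserving directed unions), ordered pointwise, with pointwise addition and scaling; $\mathcal V_{\le1}(X)$ those with $\mu(X)\le1$. Products carry the componentwise order and operations. $\mathrm{conv}\,F$ denotes the set of finite convex combinations of elements of $F$. The Lawson topology is generated by the Scott-open sets and the complements of principal up-sets ${\uparrow}x$. *)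

From HB Require Import structures.
From mathcomp Require Import all_boot all_order all_algebra.
From mathcomp Require Import boolp classical_sets reals constructive_ereal ereal.
From mathcomp Require Import Rstruct.
From Stdlib Require Import List.

Set Implicit Arguments.
Unset Strict Implicit.
Unset Printing Implicit Defensive.
Import Order.TTheory GRing.Theory Num.Theory.

Local Open Scope classical_set_scope.
Local Open Scope ring_scope.

Notation RR := Rdefinitions.R.

Section OrderNotions.
Variable T : Type.
Variable le : T -> T -> Prop.

Definition is_partial_order : Prop :=
  (forall x, le x x) /\
  (forall x y z, le x y -> le y z -> le x z) /\
  (forall x y, le x y -> le y x -> x = y).

Definition directed (D : set T) : Prop :=
  (exists x, D x) /\
  (forall x y, D x -> D y -> exists z, D z /\ le x z /\ le y z).

Definition is_sup (D : set T) (s : T) : Prop :=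
  (forall d, D d -> le d s) /\
  (forall u, (forall d, D d -> le d u) -> le s u).

Definition is_dcpo : Prop :=
  is_partial_order /\ forall D, directed D -> exists s, is_sup D s.

Definition way_below (x y : T) : Prop :=
  forall D s, directed D -> is_sup D s -> le y s -> exists d, D d /\ le x d.

Definition is_domain : Prop :=
  is_dcpo /\
  forall x, directed [set y | way_below y x] /\ is_sup [set y | way_below y x] x.

Definition upper_set (A : set T) : Prop := forall x y, A x -> le x y -> A y.

Definition scott_open (U : set T) : Prop :=
  upper_set U /\
  forall D s, directed D -> is_sup D s -> U s -> exists d, D d /\ U d.

End OrderNotions.

Section Topology.
Variable T : Type.

Definition compact_wrt (opn : set T -> Prop) (K : set T) : Prop :=
  forall (J : Type) (U : J -> set T),
    (forall j, opn (U j)) ->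
    (forall x, K x -> exists j, U j x) ->
    exists s : list J, forall x, K x -> exists j, List.In j s /\ U j x.

Definition saturated_wrt (opn : set T -> Prop) (A : set T) : Prop :=
  forall x, (forall U, opn U -> (forall y, A y -> U y) -> U x) -> A x.

Definition generated_open (S : set T -> Prop) (U : set T) : Prop :=
  forall x, U x -> exists l : list (set T),
    (forall B, List.In B l -> S B) /\ (forall B, List.In B l -> B x) /\
    (forall y, (forall B, List.In B l -> B y) -> U y).

End Topology.

Section Domains.
Variables (T : Type) (le : T -> T -> Prop).

Definition scott_compact (K : set T) := compact_wrt (scott_open le) K.
Definition scott_saturated (K : set T) := saturated_wrt (scott_open le) K.

Definition coherent : Prop :=
  forall K1 K2, scott_compact K1 -> scott_saturated K1 ->
                scott_compact K2 -> scott_saturated K2 ->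
                scott_compact (K1 `&` K2).

Definition scott_clopen (V : set T) : Prop :=
  scott_open le V /\ scott_open le (~` V).

Definition zero_dimensional : Prop :=
  forall U x, scott_open le U -> U x ->
    exists V, scott_clopen V /\ V x /\ (forall y, V y -> U y).

Definition lawson_subbasis (B : set T) : Prop :=
  scott_open le B \/ exists x, B = ~` [set y | le x y].

Definition lawson_compact (K : set T) : Prop :=
  compact_wrt (generated_open lawson_subbasis) K.

End Domains.

Local Open Scope ereal_scope.

Section Valuations.
Variables (X : Type) (le : X -> X -> Prop).

Definition sopen := {U : set X | scott_open le U}.

Definition is_valuation (mu : sopen -> \bar RR) : Prop :=
  (forall U, 0 <= mu U) /\
  (forall U : sopen, (forall x, ~ proj1_sig U x) -> mu U = 0) /\
  (forall U V : sopen, proj1_sig U `<=` proj1_sig V -> mu U <= mu V) /\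
  (forall U V W W' : sopen,
      proj1_sig W = proj1_sig U `&` proj1_sig V ->
      proj1_sig W' = proj1_sig U `|` proj1_sig V ->
      mu U + mu V = mu W + mu W') /\
  (forall (J : Type) (D : J -> sopen) (W : sopen),
      (exists j : J, True) ->
      (forall j k, exists l, proj1_sig (D j) `<=` proj1_sig (D l) /\
                             proj1_sig (D k) `<=` proj1_sig (D l)) ->
      proj1_sig W = \bigcup_j proj1_sig (D j) ->
      mu W = ereal_sup [set mu (D j) | j in [set: J]]).

Definition valuation := {mu : sopen -> \bar RR | is_valuation mu}.

Definition val_fun (m : valuation) : sopen -> \bar RR := proj1_sig m.

Definition subprob (m : valuation) : Prop :=
  forall U : sopen, (forall x, proj1_sig U x) -> val_fun m U <= 1.

End Valuations.

Section Product.
Variables (I : Type) (X : I -> Type) (le : forall i, X i -> X i -> Prop).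

Definition prodV := forall i, valuation (@le i).

Definition prodV_le (p q : prodV) : Prop :=
  forall i (U : sopen (@le i)), val_fun (p i) U <= val_fun (q i) U.

Definition conv (F : list prodV) : set prodV :=
  [set p | exists (n : nat) (a : 'I_n -> RR) (q : 'I_n -> prodV),
      (forall k, List.In (q k) F) /\
      (forall k, (0 <= a k)%R) /\
      (\sum_(k < n) a k = 1)%R /\
      (forall i (U : sopen (@le i)),
          val_fun (p i) U = \sum_(k < n) ((a k)%:E * val_fun (q k i) U))].

End Product.

From HB Require Import structures.
From mathcomp Require Import all_boot all_order all_algebra.
From mathcomp Require Import all_classical all_reals all_analysis.
From mathcomp Require Import Rstruct Rstruct_topology.
From Stdlib Require Import List.

(* conv F is the image of the standard simplex under v |-> sum_k v_k F_k, so it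
   suffices that this map is continuous from the Euclidean topology of the
   simplex to the Lawson topology.  Evaluating at a fixed open set is a linear
   form with finite coefficients, which handles the complements of principal
   up-sets.  For a Scott-open S containing sum_k v_k F_k: this point is the
   directed supremum of the points sum_k r v_k F_k (r < 1), so one of them lies
   in S, and so does everything above it, in particular the image of every
   simplex point w with w_k > r v_k whenever v_k > 0. *)

Set Implicit Arguments.
Unset Strict Implicit.
Unset Printing Implicit Defensive.
Import Order.TTheory GRing.Theory Num.Theory.
Import numFieldNormedType.Exports.

Local Open Scope classical_set_scope.
Local Open Scope ring_scope.

Lemma In_mem (T : eqType) (x : T) (s : list T) : x \in s -> List.In x s.
Proof.
by elim: s => [|a s IH] //; rewrite inE => /orP[/eqP ->|/IH]; [left|right].
Qed.

Lemma near_all_In (T A : Type) (F : set_system T) (P : A -> T -> Prop)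
    (l : list A) : Filter F ->
  (forall a, List.In a l -> \forall x \near F, P a x) ->
  \forall x \near F, forall a, List.In a l -> P a x.
Proof.
move=> FF; elim: l => [_|a l IH Pl]; first exact: nearW.
apply: filterS2 (Pl a (or_introl erefl)) (IH (fun b bl => Pl b (or_intror bl))).
by move=> x Pax Plx b /= [<-|bl]; [exact: Pax | exact: Plx].
Qed.

Lemma tnth_In (T : Type) (s : list T) (k : 'I_(size s)) :
  List.In (tnth (in_tuple s) k) s.
Proof.
elim: s k => [[//]|a s IH] [[|k] ks]; first by left.
by right; have := IH (Ordinal (ks : (k < size s)%N)); rewrite !(tnth_nth a).
Qed.

Lemma In_tnth (T : Type) (s : list T) x :
  List.In x s -> exists k : 'I_(size s), tnth (in_tuple s) k = x.
Proof.
elim: s => [//|a s IH] /= [->|/IH [k <-]]; first by exists ord0; rewrite (tnth_nth x).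
by exists (lift ord0 k); rewrite !(tnth_nth x).
Qed.

Section RelativeContinuity.
Variables (T : ptopologicalType) (S : Type) (C : set T) (f : T -> S).

Definition rel_open_preimage (U : set S) :=
  forall v, C v -> U (f v) -> \forall w \near v, C w -> U (f w).

Lemma rel_open_preimage_generated (B : set S -> Prop) (U : set S) :
  (forall V, B V -> rel_open_preimage V) ->
  generated_open B U -> rel_open_preimage U.
Proof.
move=> Bcont Uopen v Cv /Uopen [l [lB [lfv lU]]].
apply: filterS (near_all_In _ (fun V Vl => Bcont V (lB V Vl) v Cv (lfv V Vl))).
by move=> w lw Cw; apply: lU => V Vl; exact: lw.
Qed.

Lemma compact_wrt_image (opn : set S -> Prop) :
  compact C -> (forall U, opn U -> rel_open_preimage U) ->
  compact_wrt opn (f @` C).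
Proof.
move=> Ccpt fcont J U Uopen fCcov.
pose O (j : {classic J}) := [set w | C w -> U j (f w)]°.
have Ocov : C `<=` cover [set: {classic J}] O.
  move=> v Cv; have [j Ujv] := fCcov _ (ex_intro2 _ _ v Cv erefl).
  by exists j => //; exact: fcont (Uopen j) v Cv Ujv.
rewrite compact_cover in Ccpt.
have [D _ DcovC] := Ccpt _ setT O (fun j _ => @open_interior _ _) Ocov.
exists (finmap.enum_fset D) => _ [v Cv <-].
have [j Dj Ojv] := DcovC v Cv.
exists j; split; first exact: (In_mem (s := finmap.enum_fset D) Dj).
exact: nbhs_singleton Ojv Cv.
Qed.

End RelativeContinuity.

Lemma linear_form_continuous (n : nat) (a : 'I_n -> RR) :
  continuous (fun w : 'rV[RR]_n => \sum_k w ord0 k * a k).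
Proof.
apply: (@continuous_big RR^o) => [|k _]; first exact: add_continuous.
by move=> w; apply: continuousM; [exact: coord_continuous | exact: cst_continuous].
Qed.

Definition simplex (n : nat) :=
  [set v : 'rV[RR]_n | (forall k, 0 <= v ord0 k) /\ \sum_k v ord0 k = 1].
Arguments simplex : clear implicits.

Lemma simplex_compact (n : nat) : compact (simplex n).
Proof.
have cube := @rV_compact RR n (fun _ => `[0, 1]%classic) (fun _ => @segment_compact RR 0 1).
apply: subclosed_compact cube _; last first.
  move=> v [v_ge0 v_sum1] k; rewrite /= in_itv /= v_ge0 -v_sum1.
  by rewrite (bigD1 k) //= lerDl sumr_ge0.
have -> : simplex n =
    \bigcap_k ((fun w : 'rV[RR]_n => w ord0 k) @^-1` [set x | 0 <= x]) `&`
    ((fun w : 'rV[RR]_n => \sum_k w ord0 k) @^-1` [set 1]).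
  by apply/seteqP; split=> v /= [v_ge0 v_sum1]; split=> // k *; exact: v_ge0.
apply: closedI; first apply: closed_bigI => k _.
  by apply: closed_comp; [move=> w _; exact: coord_continuous | exact: closed_ge].
apply: closed_comp; last exact: closed_eq.
move=> w _; apply: (@continuous_big RR^o) => [|k _]; first exact: add_continuous.
exact: coord_continuous.
Qed.

Definition directed_family (T : Type) (le : T -> T -> Prop) (J : Type)
    (D : J -> sopen le) :=
  forall j k, exists l, proj1_sig (D j) `<=` proj1_sig (D l) /\
                        proj1_sig (D k) `<=` proj1_sig (D l).

Section ValuationAxioms.
Variables (T : Type) (le : T -> T -> Prop) (mu : valuation le).

Lemma valuation_ge0 U : (0 <= val_fun mu U)%E.
Proof. by have [mu_ge0 _] := proj2_sig mu; apply: mu_ge0. Qed.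

Lemma valuation_strict (U : sopen le) :
  (forall x, ~ proj1_sig U x) -> val_fun mu U = 0%E.
Proof. by have [_ [mu_strict _]] := proj2_sig mu; apply: mu_strict. Qed.

Lemma valuation_mono (U V : sopen le) :
  proj1_sig U `<=` proj1_sig V -> (val_fun mu U <= val_fun mu V)%E.
Proof. by have [_ [_ [mu_mono _]]] := proj2_sig mu; apply: mu_mono. Qed.

Lemma valuation_modular (U V W W' : sopen le) :
  proj1_sig W = proj1_sig U `&` proj1_sig V ->
  proj1_sig W' = proj1_sig U `|` proj1_sig V ->
  (val_fun mu U + val_fun mu V = val_fun mu W + val_fun mu W')%E.
Proof. by have [_ [_ [_ [mu_modular _]]]] := proj2_sig mu; apply: mu_modular. Qed.

Lemma valuation_sup (J : Type) (D : J -> sopen le) (W : sopen le) :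
  (exists j : J, True) ->
  directed_family D ->
  proj1_sig W = \bigcup_j proj1_sig (D j) ->
  val_fun mu W = ereal_sup [set val_fun mu (D j) | j in [set: J]].
Proof. by have [_ [_ [_ [_ mu_sup]]]] := proj2_sig mu; apply: mu_sup. Qed.

End ValuationAxioms.

Lemma scott_open_setT (T : Type) (le : T -> T -> Prop) : scott_open le setT.
Proof. by split=> // D s [[d Dd] _] _ _; exists d. Qed.

Lemma subprob_fin_num (T : Type) (le : T -> T -> Prop) (mu : valuation le) U :
  subprob mu -> val_fun mu U \is a fin_num.
Proof.
move=> mu_le1; rewrite ge0_fin_numE ?valuation_ge0 //.
apply: le_lt_trans (ltry 1).
apply: le_trans (mu_le1 (exist _ _ (scott_open_setT le)) _) => //.
exact: valuation_mono.
Qed.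

Lemma directed_list_ub (T : Type) (le : T -> T -> Prop) (J : Type)
    (D : J -> sopen le) (j0 : J) :
  directed_family D ->
  forall s : list J, exists j, forall i, List.In i s -> proj1_sig (D i) `<=` proj1_sig (D j).
Proof.
move=> Ddir; elim => [|a s [j IH]]; first by exists j0.
have [l [al jl]] := Ddir a j.
by exists l => i /= [<-|/IH iDj] //; exact: subset_trans iDj jl.
Qed.

Lemma valuation_ext (T : Type) (le : T -> T -> Prop) (mu nu : valuation le) :
  val_fun mu = val_fun nu -> mu = nu.
Proof.
by case: mu nu => f fP [g gP] /= fg; subst g; congr exist; exact: Prop_irrelevance.
Qed.

Section FiniteCombination.
Variables (T : Type) (le : T -> T -> Prop) (n : nat) (mu : 'I_n -> valuation le).
Hypothesis mu_fin : forall k U, val_fun (mu k) U \is a fin_num.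
Variable c : 'I_n -> RR.
Hypothesis c_ge0 : forall k, 0 <= c k.

Definition real_val k U := fine (val_fun (mu k) U).

Lemma real_valE k U : val_fun (mu k) U = (real_val k U)%:E.
Proof. by rewrite fineK. Qed.

Lemma real_val_ge0 k U : 0 <= real_val k U.
Proof. by rewrite -lee_fin -real_valE valuation_ge0. Qed.

Lemma real_val_mono k (U V : sopen le) :
  proj1_sig U `<=` proj1_sig V -> real_val k U <= real_val k V.
Proof. by move=> /(valuation_mono (mu k)); rewrite !real_valE. Qed.

Definition comb_val U := \sum_k c k * real_val k U.

Lemma comb_val_mono (U V : sopen le) :
  proj1_sig U `<=` proj1_sig V -> comb_val U <= comb_val V.
Proof. by move=> UV; apply: ler_sum => k _; rewrite ler_wpM2l ?real_val_mono. Qed.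

Section DirectedUnion.
Variables (J : Type) (D : J -> sopen le) (W : sopen le) (j0 : J).
Hypothesis Ddir : directed_family D.
Hypothesis DW : proj1_sig W = \bigcup_j proj1_sig (D j).

Lemma real_val_approx k e : 0 < e -> exists j, real_val k W - e < real_val k (D j).
Proof.
move=> e0; have : ((real_val k W - e)%:E < val_fun (mu k) W)%E.
  by rewrite real_valE lte_fin ltrBlDr ltrDl.
rewrite (valuation_sup (mu k) (ex_intro _ j0 I) Ddir DW) => /ereal_sup_gt[_ [j _ <-]].
by rewrite real_valE lte_fin; exists j.
Qed.

Lemma comb_val_approx e : 0 < e -> exists j, comb_val W <= comb_val (D j) + e.
Proof.
move=> e0; pose B := \sum_k c k.
have B1_gt0 : 0 < B + 1 by rewrite ltr_wpDl ?sumr_ge0.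
pose e' := e / (B + 1).
have e'_gt0 : 0 < e' by rewrite divr_gt0.
have [jf jfP] := choice (fun k => real_val_approx k e'_gt0).
have [j jP] := directed_list_ub j0 Ddir (map jf (enum 'I_n)).
exists j; apply: (@le_trans _ _ (\sum_k c k * (real_val k (D j) + e'))).
  apply: ler_sum => k _; rewrite ler_wpM2l // -lerBlDr.
  apply: ltW (lt_le_trans (jfP k) (real_val_mono k (jP _ _))).
  by apply: List.in_map; apply: In_mem; rewrite mem_enum.
rewrite /comb_val; under eq_bigr do rewrite mulrDr.
rewrite big_split /= lerD2l -mulr_suml -/B /e' mulrA ler_pdivrMr //.
by rewrite mulrC ler_wpM2l ?ltW // ltrDl.
Qed.

End DirectedUnion.

Lemma comb_val_valuation : is_valuation (fun U => (comb_val U)%:E).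
Proof.
split; [|split; [|split; [|split]]].
- by move=> U; rewrite lee_fin sumr_ge0 // => k _; rewrite mulr_ge0 ?real_val_ge0.
- move=> U U0; rewrite /comb_val big1 // => k _.
  by rewrite /real_val valuation_strict // mulr0.
- by move=> U V UV; rewrite lee_fin comb_val_mono.
- move=> U V W W' WUV W'UV; rewrite -!EFinD /comb_val -!big_split.
  congr _%:E; apply: eq_bigr => k _ /=; rewrite -!mulrDr; congr (_ * _).
  by have := valuation_modular (mu k) WUV W'UV; rewrite !real_valE -!EFinD => -[].
move=> J D W [j0 _] Ddir DW; apply/eqP; rewrite eq_le; apply/andP; split.
  apply/lee_addgt0Pr => e e0; have [j jP] := comb_val_approx j0 Ddir DW e0.
  rewrite -lee_fin in jP; apply: le_trans jP _; rewrite EFinD leeD2r //.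
  by apply: ereal_sup_ubound; exists j.
apply: ge_ereal_sup => _ [j _ <-]; rewrite lee_fin comb_val_mono // DW.
by move=> x Djx; exists j.
Qed.

End FiniteCombination.

Section ConvexHull.
Variables (I : Type) (X : I -> Type) (le : forall i, X i -> X i -> Prop).
Variable F : list (prodV le).
Hypothesis F_subprob : forall p, List.In p F -> forall i, subprob (p i).

Local Notation n := (size F).
Local Notation leV := (@prodV_le I X le).
Implicit Types (v w : 'rV[RR]_n) (i : I) (x : prodV le).

Definition vertex (k : 'I_n) : prodV le := tnth (in_tuple F) k.

Lemma vertex_fin_num i k U : val_fun (vertex k i) U \is a fin_num.
Proof. exact/subprob_fin_num/(F_subprob (tnth_In k)). Qed.

(* Negative coordinates are clamped to 0, which makes [combination] total;
   on the simplex the clamping is the identity. *)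
Definition coef (v : 'rV[RR]_n) k := Num.max (v ord0 k) 0.

Lemma coef_ge0 v k : 0 <= coef v k.
Proof. by rewrite le_max lexx orbT. Qed.

Lemma coefE v : (forall k, 0 <= v ord0 k) -> coef v =1 v ord0.
Proof. by move=> v_ge0 k; apply/max_idPl. Qed.

Definition combination (v : 'rV[RR]_n) : prodV le := fun i =>
  exist _ _ (comb_val_valuation (@vertex_fin_num i) (coef_ge0 v)).

Local Notation rv i := (real_val (fun k => vertex k i)).

Lemma rv_ge0 i k U : 0 <= rv i k U.
Proof. exact: real_val_ge0 (@vertex_fin_num i) k U. Qed.

Lemma rvE i k U : val_fun (vertex k i) U = (rv i k U)%:E.
Proof. exact: real_valE (@vertex_fin_num i) k U. Qed.

Lemma combinationE v i U : (forall k, 0 <= v ord0 k) ->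
  val_fun (combination v i) U = (\sum_k v ord0 k * rv i k U)%:E.
Proof. by move=> v_ge0; congr _%:E; apply: eq_bigr => k _; rewrite coefE. Qed.

Lemma combination_le v w : (forall k, v ord0 k <= w ord0 k) ->
  leV (combination v) (combination w).
Proof.
move=> vw i U; rewrite lee_fin; apply: ler_sum => k _.
by rewrite ler_wpM2r ?rv_ge0 // le_max2.
Qed.

Lemma conv_simplex : conv F = combination @` simplex n.
Proof.
apply/seteqP; split => [p [m [a [q [qF [a_ge0 [a_sum1 pE]]]]]]|_ [v [v_ge0 v_sum1] <-]].
  have [idx idxP] := choice (fun k => In_tnth (qF k)).
  pose v := \row_j \sum_(k | idx k == j) a k.
  have v_ge0 j : 0 <= v ord0 j by rewrite mxE sumr_ge0.
  exists v.
    split=> //; under eq_bigr do rewrite mxE.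
    by rewrite -a_sum1 (partition_big idx xpredT).
  apply/esym/functional_extensionality_dep => i; apply: valuation_ext; apply/funext => U.
  rewrite pE combinationE //; under eq_bigr => k _ do rewrite -idxP rvE -EFinM.
  rewrite sumEFin (partition_big idx xpredT) //=; congr _%:E; apply: eq_bigr => j _.
  by rewrite mxE mulr_suml; apply: eq_bigr => k /eqP <-.
exists n, (v ord0), vertex; split=> [k|]; first exact: tnth_In.
do 2!split=> //; move=> i U; rewrite combinationE // -sumEFin.
by apply: eq_bigr => k _; rewrite EFinM -rvE.
Qed.

Lemma rel_open_preimage_scott S : scott_open leV S ->
  rel_open_preimage (simplex n) combination S.
Proof.
move=> [S_up S_inacc] v [v_ge0 _] Sv.
pose D := [set combination (r *: v) | r in [set r | 0 <= r < 1]].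
have scaled_ge0 r k : 0 <= r -> 0 <= (r *: v) ord0 k by rewrite mxE => r0; rewrite mulr_ge0.
have Ddir : directed leV D.
  split; first by exists (combination (0 *: v)); apply: imageP; rewrite /= lexx ltr01.
  move=> _ _ [r /andP[r0 r1] <-] [s /andP[_ s1] <-].
  exists (combination (Num.max r s *: v)); split.
    by apply: imageP; rewrite /= le_max r0 gt_max r1 s1.
  by split; apply: combination_le => k; rewrite !mxE ler_wpM2r // le_max lexx ?orbT.
have Dsup : is_sup leV D (combination v).
  split=> [_ [r /andP[r0 r1] <-]|u uD i U].
    by apply: combination_le => k; rewrite mxE ler_piMl // ltW.
  rewrite combinationE //; apply/lee_mul01Pr.
    by rewrite lee_fin sumr_ge0 // => k _; rewrite mulr_ge0 ?rv_ge0.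
  move=> r /andP[r0 r1]; have rD : D (combination (r *: v)) by apply: imageP; rewrite /= ltW.
  have /(_ i U) := uD _ rD.
  rewrite combinationE => [|k]; last exact: scaled_ge0 (ltW r0).
  by rewrite -EFinM mulr_sumr; under eq_bigr do rewrite mxE -mulrA.
have [_ [[r /andP[r0 r1] <-] Srv]] := S_inacc D _ Ddir Dsup Sv.
have near_above k : nbhs v [set w : 'rV[RR]_n | 0 <= w ord0 k -> (r *: v) ord0 k <= w ord0 k].
  rewrite mxE; have [vk0|vk_gt0] := eqVneq (v ord0 k) 0.
    by apply: filterE => w; rewrite vk0 mulr0.
  have rvk_nbhs : nbhs (v ord0 k) [set x | r * v ord0 k < x].
    apply: open_nbhs_nbhs; split; first exact: open_gt.
    by rewrite /= gtr_pMl // lt_def vk_gt0 v_ge0.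
  have := @coord_continuous _ 1 n ord0 k v _ rvk_nbhs.
  by apply: (@filterS _ _ (nbhs_filter v)) => w /= /ltW.
apply: (@filterS _ _ (nbhs_filter v) _ _ _ (filter_forall (nbhs_filter v) near_above)).
by move=> w above [w_ge0 _]; apply: S_up Srv _; apply: combination_le => k; exact: above.
Qed.

Lemma rel_open_preimage_not_above x :
  rel_open_preimage (simplex n) combination (~` [set y | leV x y]).
Proof.
move=> v [v_ge0 _] x_notle; have [i [U combv_lt]] : exists i U,
    (val_fun (combination v i) U < val_fun (x i) U)%E.
  apply: contra_notP x_notle => lt_none i U; rewrite leNgt; apply/negP => lt_iU.
  by apply: lt_none; exists i, U.
pose s w := \sum_k w ord0 k * rv i k U.
have : nbhs (s v) [set y : RR | (y%:E < val_fun (x i) U)%E].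
  by apply: open_nbhs_nbhs; split; [exact: open_ereal_lt | rewrite /= /s -combinationE].
move=> /(@linear_form_continuous _ (rv i ^~ U) v).
apply: (@filterS _ _ (nbhs_filter v)) => w sw_lt [w_ge0 _] x_le.
by have := x_le i U; rewrite combinationE // leNgt sw_lt.
Qed.

Lemma rel_open_preimage_lawson U : generated_open (lawson_subbasis leV) U ->
  rel_open_preimage (simplex n) combination U.
Proof.
apply: rel_open_preimage_generated => _ [/rel_open_preimage_scott //|[x ->]].
exact: rel_open_preimage_not_above.
Qed.

End ConvexHull.

Theorem mainTheorem15 (I : Type) (X : I -> Type)
  (le : forall i, X i -> X i -> Prop)
  (hdom : forall i, is_domain (le i))
  (hcoh : forall i, coherent (le i))
  (hzd : forall i, zero_dimensional (le i))
  (F : list (prodV le))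
  (hF : forall p, List.In p F -> forall i, subprob (p i)) :
  lawson_compact (@prodV_le I X le) (conv F).
Proof.
rewrite (conv_simplex hF); apply: compact_wrt_image.
  exact: simplex_compact.
exact: rel_open_preimage_lawson.
Qed.
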